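(* In the setting below, with $Q=L/\mu$, suppose $0<\eta\le\frac1L$. Then for every $k\ge 0$, \[ \|x_k-x^*\|\le \frac{2}{\mu}\|d_k\|+2\eta Q\sum_{j=(k-K)_+}^{k-1}\|d_j\|. \]
   Context: Let $m,n\ge 1$ be integers and $\|\cdot\|$ the Euclidean norm on $\mathbb{R}^n$. For $i=1,\dots,m$, let $f_i:\mathbb{R}^n\to\mathbb{R}$ be continuously differentiable with $\|\nabla f_i(x)-\nabla f_i(y)\|\le L_i\|x-y\|$ for all $x,y$, where $L_i\ge 0$ (the $f_i$ are not assumed convex). Let $f=\frac1m\sum_{i=1}^m f_i$ and $L=\frac1m\sum_{i=1}^m L_i$. Assume $f$ is $\mu$-strongly convex for some $\mu>0$ (i.e. $x\mapsto f(x)-\frac{\mu}{2}\|x\|^2$ is convex). Let $r:\mathbb{R}^n\to(-\infty,\infty]$ be proper, closed and convex, let $F=f+r$, and let $x^*$ be the unique minimizer of $F$. For $\eta>0$ define $\mathrm{prox}_r^\eta(y)=\arg\min_{x\in\mathbb{R}^n}\{\frac12\|x-y\|^2+\eta r(x)\}$. PIAG method: fix an integer $K\ge 0$, a step size $\eta>0$ and $x_0\in\mathbb{R}^n$; for each $k\ge0$ and each $i$ let $\tau_{i,k}$ be any (deterministically chosen) integer with $\max(k-K,0)\le\tau_{i,k}\le k$; set $g_k=\frac1m\sum_{i=1}^m\nabla f_i(x_{\tau_{i,k}})$ and $x_{k+1}=\mathrm{prox}_r^\eta(x_k-\eta g_k)$. Define $d_k=(x_{k+1}-x_k)/\eta$.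 Write $(t)_+=\max(t,0)$; empty sums are zero. *)

From HB Require Import structures.
From mathcomp Require Import all_boot all_order all_algebra.
From mathcomp Require Import all_classical all_reals all_analysis.
Set Implicit Arguments. Unset Strict Implicit. Unset Printing Implicit Defensive.
Import Order.TTheory GRing.Theory Num.Theory.
Import numFieldNormedType.Exports.
Local Open Scope ring_scope.

Section Defs.
Context {R : realType} {n : nat}.

Definition dotv (x y : 'rV[R]_n) : R := \sum_(i < n) x ord0 i * y ord0 i.
Definition enorm (x : 'rV[R]_n) : R := Num.sqrt (dotv x x).

Definition is_gradient (f : 'rV[R]_n -> R) (g : 'rV[R]_n -> 'rV[R]_n) : Prop :=
  forall x, differentiable f x /\ forall h, 'd f x h = dotv (g x) h.

Definition lipschitz_with (g : 'rV[R]_n -> 'rV[R]_n) (L : R) : Prop :=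
  forall x y, enorm (g x - g y) <= L * enorm (x - y).

Definition convex_fun (h : 'rV[R]_n -> R) : Prop :=
  forall (x y : 'rV[R]_n) (t : R), 0 <= t -> t <= 1 ->
    h (t *: x + (1 - t) *: y) <= t * h x + (1 - t) * h y.

Definition strongly_convex (f : 'rV[R]_n -> R) (mu : R) : Prop :=
  convex_fun (fun x => f x - mu / 2 * enorm x ^+ 2).

Definition proper_efun (r : 'rV[R]_n -> \bar R) : Prop :=
  (exists x, r x != +oo%E) /\ (forall x, r x != -oo%E).

Definition convex_efun (r : 'rV[R]_n -> \bar R) : Prop :=
  forall (x y : 'rV[R]_n) (t : R), 0 <= t -> t <= 1 ->
    (r (t *: x + (1 - t) *: y)%R <= t%:E * r x + (1 - t)%R%:E * r y)%E.

(* closed = lower semicontinuous (closed epigraph) *)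
Definition closed_efun (r : 'rV[R]_n -> \bar R) : Prop :=
  lower_semicontinuous r.

Definition is_prox (r : 'rV[R]_n -> \bar R) (eta : R) (y p : 'rV[R]_n) : Prop :=
  forall x, ((2^-1 * enorm (p - y) ^+ 2)%R%:E + eta%:E * r p
             <= (2^-1 * enorm (x - y) ^+ 2)%R%:E + eta%:E * r x)%E.

Definition is_minimizer (f : 'rV[R]_n -> R) (r : 'rV[R]_n -> \bar R)
  (xs : 'rV[R]_n) : Prop :=
  forall x, ((f xs)%:E + r xs <= (f x)%:E + r x)%E.

End Defs.

From HB Require Import structures.
From mathcomp Require Import all_boot all_order all_algebra.
From mathcomp Require Import all_classical all_reals all_analysis.
From mathcomp Require Import ring lra.
Import Order.TTheory GRing.Theory Num.Theory.
Import numFieldNormedType.Exports.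
Local Open Scope ring_scope.

(* Write w = x_k - xs, d = d_k and e = G(x_k) - g_k, where G is the full
   gradient, so that e is the error caused by the delays.  The variational
   inequality of the prox step, the optimality condition of xs for f + r and
   strong monotonicity of G combine into
     mu |w|^2 <= <e, w + eta d> - <d, w> - eta <G(x_k) - G(xs), d> - eta |d|^2,
   and Cauchy-Schwarz together with eta L <= 1 turns this into
     mu |w|^2 <= (|e| + 2 |d|) |w| + eta |e|^2 / 4.
   Since eta mu <= eta L <= 1, this quadratic inequality yields
   mu |w| <= 2 (|d| + |e|).  Finally |e| <= L eta sum_{j=(k-K)_+}^{k-1} |d_j|,
   by the Lipschitz bounds and telescoping x_k - x_{tau_{i,k}}.
   As r is extended-valued and only convex, all first-order conditions are
   derived by letting t -> 0+ in convexity inequalities along segments. *)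

Section Euclidean.
Context {R : realType} {n : nat}.
Implicit Types x y z : 'rV[R]_n.

Lemma dotvC x y : dotv x y = dotv y x.
Proof. by apply: eq_bigr => i _; rewrite mulrC. Qed.

Lemma dotvDl x y z : dotv (x + y) z = dotv x z + dotv y z.
Proof. by rewrite /dotv -big_split; apply: eq_bigr => i _; rewrite mxE mulrDl. Qed.

Lemma dotvDr x y z : dotv z (x + y) = dotv z x + dotv z y.
Proof. by rewrite dotvC dotvDl !(dotvC z). Qed.

Lemma dotvZl c x y : dotv (c *: x) y = c * dotv x y.
Proof. by rewrite /dotv mulr_sumr; apply: eq_bigr => i _; rewrite mxE mulrA. Qed.

Lemma dotvZr c x y : dotv y (c *: x) = c * dotv y x.
Proof. by rewrite dotvC dotvZl dotvC. Qed.

Lemma dotvNl x y : dotv (- x) y = - dotv x y.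
Proof. by rewrite -scaleN1r dotvZl mulN1r. Qed.

Lemma dotvNr x y : dotv y (- x) = - dotv y x.
Proof. by rewrite dotvC dotvNl dotvC. Qed.

Lemma dotvBl x y z : dotv (x - y) z = dotv x z - dotv y z.
Proof. by rewrite dotvDl dotvNl. Qed.

Lemma dotvBr x y z : dotv z (x - y) = dotv z x - dotv z y.
Proof. by rewrite dotvDr dotvNr. Qed.

Lemma dotv0l x : dotv 0 x = 0.
Proof. by rewrite -(scale0r 0) dotvZl mul0r. Qed.

Lemma dotv0r x : dotv x 0 = 0.
Proof. by rewrite dotvC dotv0l. Qed.

Lemma dotv_suml (I : Type) (s : seq I) (F : I -> 'rV[R]_n) y :
  dotv (\sum_(i <- s) F i) y = \sum_(i <- s) dotv (F i) y.
Proof.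
elim: s => [|a s IH]; first by rewrite !big_nil dotv0l.
by rewrite !big_cons dotvDl IH.
Qed.

Lemma dotv_ge0 x : 0 <= dotv x x.
Proof. by apply: sumr_ge0 => i _; rewrite -expr2 sqr_ge0. Qed.

Lemma dotv_eq0 x : (dotv x x == 0) = (x == 0).
Proof.
apply/idP/eqP => [|->]; last by rewrite dotv0l.
rewrite psumr_eq0 => [/allP x0|i _]; last by rewrite -expr2 sqr_ge0.
apply/rowP => i; rewrite mxE; apply/eqP.
by have := x0 i (mem_index_enum i); rewrite mulf_eq0 orbb.
Qed.

Lemma dotv_scaleD a v x :
  dotv (a *: v + x) (a *: v + x) = dotv x x + 2 * a * dotv x v + a ^+ 2 * dotv v v.
Proof. by rewrite !dotvDl !dotvDr !dotvZl !dotvZr (dotvC v x); ring. Qed.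

Lemma enorm_ge0 x : 0 <= enorm x.
Proof. exact: sqrtr_ge0. Qed.

Lemma enorm_sqr x : enorm x ^+ 2 = dotv x x.
Proof. by rewrite sqr_sqrtr // dotv_ge0. Qed.

Lemma enorm0 : enorm (0 : 'rV[R]_n) = 0.
Proof. by rewrite /enorm dotv0l sqrtr0. Qed.

Lemma enorm_gt0 x : (0 < enorm x) = (x != 0).
Proof. by rewrite sqrtr_gt0 lt_neqAle dotv_ge0 andbT eq_sym dotv_eq0. Qed.

Lemma enormZ c x : enorm (c *: x) = `|c| * enorm x.
Proof. by rewrite /enorm dotvZl dotvZr mulrA -expr2 sqrtrM ?sqr_ge0 // sqrtr_sqr. Qed.

Lemma enormN x : enorm (- x) = enorm x.
Proof. by rewrite -scaleN1r enormZ normrN1 mul1r. Qed.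

Lemma enorm_distC x y : enorm (x - y) = enorm (y - x).
Proof. by rewrite -enormN opprB. Qed.

Lemma cauchy_schwarz x y : dotv x y <= enorm x * enorm y.
Proof.
have [->|x0] := eqVneq x 0; first by rewrite dotv0l enorm0 mul0r.
have [->|y0] := eqVneq y 0; first by rewrite dotv0r enorm0 mulr0.
have xy0 : 0 < enorm x * enorm y by rewrite mulr_gt0 ?enorm_gt0.
have := dotv_ge0 (enorm y *: x - enorm x *: y).
rewrite dotvBl !dotvBr !dotvZl !dotvZr (dotvC y x) -!enorm_sqr => h.
nra.
Qed.

Lemma cauchy_schwarzN x y : - dotv x y <= enorm x * enorm y.
Proof. by rewrite -dotvNl -(enormN x) cauchy_schwarz. Qed.

Lemma ler_enormD x y : enorm (x + y) <= enorm x + enorm y.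
Proof.
rewrite -(ler_pXn2r (_ : (0 < 2)%N)) ?nnegrE ?addr_ge0 ?enorm_ge0 //.
rewrite !enorm_sqr sqrrD !enorm_sqr dotvDl !dotvDr (dotvC y x).
by have := cauchy_schwarz x y; lra.
Qed.

Lemma ler_enorm_sum (I : Type) (s : seq I) (F : I -> 'rV[R]_n) :
  enorm (\sum_(i <- s) F i) <= \sum_(i <- s) enorm (F i).
Proof.
elim: s => [|a s IH]; first by rewrite !big_nil enorm0.
by rewrite !big_cons; apply: le_trans (ler_enormD _ _) _; rewrite lerD2l.
Qed.

Lemma enorm_telescope (x : nat -> 'rV[R]_n) [j k : nat] : (j <= k)%N ->
  enorm (x k - x j) <= \sum_(j <= l < k) enorm (x l.+1 - x l).
Proof. by move=> jk; rewrite -telescope_sumr //; exact: ler_enorm_sum. Qed.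

End Euclidean.

Section Limits.
Local Open Scope classical_set_scope.
Context {R : realType}.

Lemma cvg_big_sum (T : Type) (F : set_system T) {FF : Filter F} (I : Type)
    (s : seq I) (u : I -> T -> R) (l : I -> R) :
  (forall i, u i t @[t --> F] --> l i) ->
  \sum_(i <- s) u i t @[t --> F] --> \sum_(i <- s) l i.
Proof.
move=> ul; elim: s => [|a s IH].
  by rewrite big_nil; under eq_fun do rewrite big_nil; exact: cvg_cst.
by rewrite big_cons; under eq_fun do rewrite big_cons; exact: cvgD.
Qed.

(* The shape of the bounds that convexity gives on difference quotients along a segment. *)
Lemma cvg_le_affine {q : R -> R} {l c k : R} :
  q t @[t --> 0^'] --> l ->
  (forall t, 0 < t -> t <= 1 -> q t <= c + t * k) -> l <= c.
Proof.
move=> /cvg_dnbhs_at_right ql qle.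
have cl : c + t * k @[t --> 0^'+] --> c.
  rewrite -[X in _ --> X]addr0 -[X in _ --> c + X](mul0r k).
  apply: cvgD; first exact: cvg_cst.
  by apply: cvgM; [exact: cvg_at_right_filter | exact: cvg_cst].
apply: (ler_cvg_to ql cl) => //; near=> t; apply: qle.
  by near: t; exact: nbhs_right_gt.
by near: t; exact: nbhs_right_le.
Unshelve. all: by end_near.
Qed.

End Limits.

Section Gateaux.
Local Open Scope classical_set_scope.
Context {R : realType} {n : nat}.

Definition is_gateaux_gradient (f : 'rV[R]_n -> R) (G : 'rV[R]_n -> 'rV[R]_n) :=
  forall x v, t^-1 * (f (t *: v + x) - f x) @[t --> 0^'] --> dotv (G x) v.

Lemma is_gradient_gateaux f G : is_gradient f G -> is_gateaux_gradient f G.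
Proof.
move=> fG x v; have [df dfE] := fG x.
by rewrite -dfE -deriveE //; exact: diff_derivable.
Qed.

Lemma is_gateaux_gradient_scale_sum (I : Type) (s : seq I) (c : R)
    (fs : I -> 'rV[R]_n -> R) (gs : I -> 'rV[R]_n -> 'rV[R]_n) :
  (forall i, is_gateaux_gradient (fs i) (gs i)) ->
  is_gateaux_gradient (fun z => c * \sum_(i <- s) fs i z)
                      (fun z => c *: \sum_(i <- s) gs i z).
Proof.
move=> fsG x v; rewrite dotvZl dotv_suml.
have -> : (fun t => t^-1 * (c * \sum_(i <- s) fs i (t *: v + x) - c * \sum_(i <- s) fs i x))
  = (fun t => c * \sum_(i <- s) t^-1 * (fs i (t *: v + x) - fs i x)).
  by apply/funext => t; rewrite -mulrBr -sumrB mulrCA mulr_sumr.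
by apply: cvgM; [exact: cvg_cst | apply: cvg_big_sum => i; exact: fsG].
Qed.

End Gateaux.

Section StrongConvexity.
Context {R : realType} {n : nat} {f : 'rV[R]_n -> R} {G : 'rV[R]_n -> 'rV[R]_n} {mu : R}.
Hypotheses (fG : is_gateaux_gradient f G) (f_sc : strongly_convex f mu).

Lemma strongly_convex_gradient_ineq x y :
  f x + dotv (G x) (y - x) + mu / 2 * enorm (y - x) ^+ 2 <= f y.
Proof.
set v := y - x.
suff : dotv (G x) v <= f y - f x - mu / 2 * enorm v ^+ 2 by lra.
apply: (cvg_le_affine (k := mu / 2 * enorm v ^+ 2) (fG x v)) => t t0 t1.
have := f_sc y x t (ltW t0) t1.
have -> : t *: y + (1 - t) *: x = t *: v + x.
  by rewrite scalerBr scalerBl scale1r addrA addrAC.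
have -> : y = 1 *: v + x by rewrite scale1r subrK.
rewrite !enorm_sqr !dotv_scaleD => conv.
by rewrite ler_pdivrMl //; lra.
Qed.

Lemma strongly_convex_gradient_monotone x y :
  mu * enorm (x - y) ^+ 2 <= dotv (G x - G y) (x - y).
Proof.
have := strongly_convex_gradient_ineq x y; have := strongly_convex_gradient_ineq y x.
rewrite (enorm_distC y x) dotvBl -[y - x]opprB dotvNr; lra.
Qed.

End StrongConvexity.

Section ConvexEfun.
Context {R : realType} {n : nat} {r : 'rV[R]_n -> \bar R}.
Implicit Types (x y z p : 'rV[R]_n) (f : 'rV[R]_n -> R).

Lemma is_minimizer_fin [f xs] : proper_efun r -> is_minimizer f r xs ->
  exists rs, r xs = rs%:E.
Proof.
move=> [[x0 rx0] rNoo] xs_min.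
case E: (r xs) => [rs||]; [by exists rs | | by move: (rNoo xs); rewrite E].
have := xs_min x0; rewrite E addey //.
by case: (r x0) rx0 (rNoo x0) => [v _ _| |] //; rewrite leye_eq.
Qed.

Lemma is_prox_fin [eta y p z rz] : (forall x, r x != -oo%E) -> 0 < eta ->
  is_prox r eta y p -> r z = rz%:E -> exists rp, r p = rp%:E.
Proof.
move=> rNoo eta0 p_prox rzE.
case E: (r p) => [rp||]; [by exists rp | | by move: (rNoo p); rewrite E].
by have := p_prox z; rewrite E rzE gt0_muley ?lte_fin // addey.
Qed.

Hypothesis r_convex : convex_efun r.

Lemma convex_efun_segment [x z t rx rz] : 0 <= t -> t <= 1 ->
  r x = rx%:E -> r z = rz%:E ->
  (r (t *: (z - x) + x) <= (t * rz + (1 - t) * rx)%:E)%E.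
Proof.
move=> t0 t1 rxE rzE.
have -> : t *: (z - x) + x = t *: z + (1 - t) *: x.
  by rewrite scalerBr scalerBl scale1r addrA addrAC.
by apply: le_trans (r_convex z x t t0 t1) _; rewrite rxE rzE.
Qed.

Lemma is_prox_variational [eta y p z rp rz] : 0 < eta -> is_prox r eta y p ->
  r p = rp%:E -> r z = rz%:E -> dotv (y - p) (z - p) <= eta * (rz - rp).
Proof.
move=> eta0 p_prox rpE rzE; set u := z - p.
rewrite -subr_le0 -[y - p]opprB dotvNl.
apply: (cvg_le_affine (k := dotv u u / 2) (cvg_cst _)) => t t0 t1.
have seg := convex_efun_segment (ltW t0) t1 rpE rzE.
have : ((2^-1 * enorm (p - y) ^+ 2)%:E + eta%:E * r p
         <= (2^-1 * enorm (t *: u + p - y) ^+ 2)%:E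
            + eta%:E * (t * rz + (1 - t) * rp)%:E)%E.
  apply: le_trans (p_prox (t *: u + p)) _.
  by rewrite leeD2l //; apply: lee_wpmul2l seg; rewrite lee_fin ltW.
rewrite rpE -!EFinM -!EFinD lee_fin -addrA.
rewrite !enorm_sqr dotv_scaleD => prox_t.
have : 0 <= t * (dotv (p - y) u + eta * (rz - rp) + t * (dotv u u / 2)) by lra.
by rewrite pmulr_rge0 //; lra.
Qed.

Lemma is_minimizer_variational [f G xs z rs rz] : is_gateaux_gradient f G ->
  is_minimizer f r xs -> r xs = rs%:E -> r z = rz%:E ->
  - dotv (G xs) (z - xs) <= rz - rs.
Proof.
move=> fG xs_min rsE rzE; set u := z - xs.
apply: (cvg_le_affine (k := 0) (cvgN (fG xs u))) => t t0 t1.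
have seg := convex_efun_segment (ltW t0) t1 rsE rzE.
have : ((f xs)%:E + r xs <= (f (t *: u + xs))%:E + (t * rz + (1 - t) * rs)%:E)%E.
  by apply: le_trans (xs_min (t *: u + xs)) _; rewrite leeD2l.
rewrite rsE -!EFinD lee_fin => min_t.
by rewrite mulr0 addr0 -mulrN ler_pdivrMl //; lra.
Qed.

End ConvexEfun.

Section ScaledSum.
Context {R : realType} {n : nat} {I : Type} {s : seq I} {c : R}.
Context {gs : I -> 'rV[R]_n -> 'rV[R]_n} {Ls : I -> R}.
Hypotheses (c_ge0 : 0 <= c) (gs_lip : forall i, lipschitz_with (gs i) (Ls i)).

Lemma enorm_scale_sumB u (w : I -> 'rV[R]_n) :
  enorm (c *: \sum_(i <- s) gs i u - c *: \sum_(i <- s) gs i (w i))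
  <= c * \sum_(i <- s) Ls i * enorm (u - w i).
Proof.
rewrite -scalerBr -sumrB enormZ ger0_norm // ler_wpM2l //.
by apply: le_trans (ler_enorm_sum _ _ _) _; apply: ler_sum => i _; exact: gs_lip.
Qed.

Lemma lipschitz_scale_sum :
  lipschitz_with (fun z => c *: \sum_(i <- s) gs i z) (c * \sum_(i <- s) Ls i).
Proof.
move=> u v; apply: le_trans (enorm_scale_sumB u (fun=> v)) _.
by rewrite -mulrA mulr_suml.
Qed.

Lemma enorm_scale_sum_delayed [x : nat -> 'rV[R]_n] [tau : I -> nat] [j k : nat] :
  (forall i, Ls i >= 0) -> (forall i, (j <= tau i <= k)%N) ->
  enorm (c *: \sum_(i <- s) gs i (x k) - c *: \sum_(i <- s) gs i (x (tau i)))
  <= (c * \sum_(i <- s) Ls i) * \sum_(j <= l < k) enorm (x l.+1 - x l).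
Proof.
move=> Ls_ge0 tau_in; apply: le_trans (enorm_scale_sumB _ _) _.
rewrite -mulrA ler_wpM2l // mulr_suml; apply: ler_sum => i _.
rewrite ler_wpM2l //; have /andP[jt tk] := tau_in i.
apply: le_trans (enorm_telescope x tk) _.
rewrite (big_cat_nat jt tk) /= lerDr.
by apply: sumr_ge0 => l _; exact: enorm_ge0.
Qed.

End ScaledSum.

Lemma strongly_monotone_lipschitz_le {R : realType} {n : nat}
    (G : 'rV[R]_n -> 'rV[R]_n) (mu L : R) : (0 < n)%N ->
  (forall x y, mu * enorm (x - y) ^+ 2 <= dotv (G x - G y) (x - y)) ->
  lipschitz_with G L -> mu <= L.
Proof.
move=> n_gt0 G_mono G_lip; pose u : 'rV[R]_n := const_mx 1.
have u_gt0 : 0 < enorm u.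
  rewrite enorm_gt0; apply/eqP => /rowP /(_ (Ordinal n_gt0)).
  by rewrite !mxE; apply/eqP; exact: oner_neq0.
have := G_mono u 0; rewrite subr0 => /le_trans /(_ (cauchy_schwarz _ _)).
move=> /le_trans /(_ (ler_wpM2r (enorm_ge0 _) (G_lip u 0))).
by rewrite subr0 -mulrA -expr2 ler_pM2r // exprn_gt0.
Qed.

Lemma quadratic_le_bound {R : realFieldType} [a b c eta mu : R] :
  0 < mu -> 0 <= eta -> eta * mu <= 1 -> 0 <= b -> 0 <= c ->
  mu * a ^+ 2 <= b * a + eta * c ^+ 2 -> mu * a <= b + c.
Proof.
move=> mu_gt0 eta_ge0 etamu b_ge0 c_ge0 quad; set z := mu * a.
have zquad : z ^+ 2 <= b * z + c ^+ 2.
  have : mu * (mu * a ^+ 2) <= mu * (b * a + eta * c ^+ 2) by rewrite ler_pM2l.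
  have : eta * mu * c ^+ 2 <= 1 * c ^+ 2 by rewrite ler_wpM2r // sqr_ge0.
  rewrite /z; lra.
rewrite leNgt; apply/negP => big.
have : 0 < z * (z - b - c) by apply: mulr_gt0; lra.
have : 0 <= c * (z - c) by apply: mulr_ge0; lra.
lra.
Qed.

Section ProxGradStep.
Context {R : realType} {n : nat} {f : 'rV[R]_n -> R} {G : 'rV[R]_n -> 'rV[R]_n}.
Context {r : 'rV[R]_n -> \bar R} {xs : 'rV[R]_n} {mu L eta : R}.
Hypotheses (fG : is_gateaux_gradient f G) (f_sc : strongly_convex f mu).
Hypotheses (G_lip : lipschitz_with G L) (r_proper : proper_efun r).
Hypotheses (r_convex : convex_efun r) (xs_min : is_minimizer f r xs).
Hypotheses (mu_gt0 : 0 < mu) (eta_gt0 : 0 < eta).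
Hypotheses (etaL : eta * L <= 1) (etamu : eta * mu <= 1).

Lemma prox_grad_step_ineq [y v d] : is_prox r eta (y - eta *: v) (y + eta *: d) ->
  mu * enorm (y - xs) ^+ 2 <= dotv (G y - v) (y - xs + eta *: d) - dotv d (y - xs)
                              - eta * dotv (G y - G xs) d - eta * enorm d ^+ 2.
Proof.
move=> p_prox; have [rs rsE] := is_minimizer_fin r_proper xs_min.
have [rp rpE] := is_prox_fin r_proper.2 eta_gt0 p_prox rsE.
have prox := is_prox_variational r_convex eta_gt0 p_prox rpE rsE.
have opt := is_minimizer_variational r_convex fG xs_min rsE rpE.
have mono := strongly_convex_gradient_monotone fG f_sc y xs.
set w := y - xs in mono *.
have E1 : y - eta *: v - (y + eta *: d) = - eta *: (v + d).
  by apply/rowP => i; rewrite !mxE; ring.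
have E2 : xs - (y + eta *: d) = - (w + eta *: d).
  by apply/rowP => i; rewrite !mxE; ring.
have E3 : y + eta *: d - xs = w + eta *: d by rewrite addrAC.
rewrite E1 E2 dotvZl dotvNr mulrNN ler_pM2l // in prox.
rewrite E3 in opt; rewrite !enorm_sqr in mono *.
move: prox opt mono; rewrite !(dotvDl, dotvDr, dotvBl, dotvBr, dotvZr, dotvNl).
lra.
Qed.


Lemma prox_grad_step_error [y v d] : is_prox r eta (y - eta *: v) (y + eta *: d) ->
  mu * enorm (y - xs) <= 2 * (enorm d + enorm (G y - v)).
Proof.
move=> p_prox; have key := prox_grad_step_ineq p_prox.
set w := y - xs in key *; set e := G y - v in key *.
have w0 := enorm_ge0 w; have d0 := enorm_ge0 d; have e0 := enorm_ge0 e.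
have ew := cauchy_schwarz e w.
have dw := cauchy_schwarzN d w.
have ed : dotv e d - enorm d ^+ 2 <= (enorm e / 2) ^+ 2.
  have := cauchy_schwarz e d; have := sqr_ge0 (enorm e / 2 - enorm d); lra.
have Gd : - eta * dotv (G y - G xs) d <= enorm w * enorm d.
  have Gw : enorm (G y - G xs) <= L * enorm w := G_lip y xs.
  have := cauchy_schwarzN (G y - G xs) d.
  have := ler_wpM2r d0 Gw.
  have : eta * L * (enorm w * enorm d) <= 1 * (enorm w * enorm d).
    by rewrite ler_wpM2r // mulr_ge0.
  have := ltW eta_gt0; nra.
have quad : mu * enorm w ^+ 2 <= (enorm e + 2 * enorm d) * enorm w
                                  + eta * (enorm e / 2) ^+ 2.
  have := ler_wpM2l (ltW eta_gt0) ed.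
  move: key; rewrite dotvDr dotvZr; lra.
have := quadratic_le_bound mu_gt0 (ltW eta_gt0) etamu _ _ quad.
by rewrite addr_ge0 ?mulr_ge0 ?divr_ge0 //; lra.
Qed.

End ProxGradStep.

Theorem lemma2 (R : realType) (m n : nat) (hm : (0 < m)%N) (hn : (0 < n)%N)
  (fs : 'I_m -> 'rV[R]_n -> R) (gs : 'I_m -> 'rV[R]_n -> 'rV[R]_n)
  (Ls : 'I_m -> R) (mu : R) (r : 'rV[R]_n -> \bar R) (xs : 'rV[R]_n)
  (K : nat) (eta : R) (tau : 'I_m -> nat -> nat) (x : nat -> 'rV[R]_n) :
  let f := fun z => m%:R^-1 * \sum_(i < m) fs i z in
  let L := m%:R^-1 * \sum_(i < m) Ls i in
  let Q := L / mu in
  let g := fun k => m%:R^-1 *: \sum_(i < m) gs i (x (tau i k)) in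
  let d := fun k => eta^-1 *: (x k.+1 - x k) in
  (forall i, is_gradient (fs i) (gs i)) ->
  (forall i, 0 <= Ls i) ->
  (forall i, lipschitz_with (gs i) (Ls i)) ->
  0 < mu -> strongly_convex f mu ->
  proper_efun r -> closed_efun r -> convex_efun r ->
  is_minimizer f r xs ->
  0 < eta -> eta <= L^-1 ->
  (forall i k, (k - K <= tau i k)%N /\ (tau i k <= k)%N) ->
  (forall k, is_prox r eta (x k - eta *: g k) (x k.+1)) ->
  forall k : nat,
    enorm (x k - xs) <=
      2 / mu * enorm (d k) + 2 * eta * Q * \sum_(k - K <= j < k) enorm (d j).
Proof.
move=> f L Q g d fs_grad Ls_ge0 gs_lip mu_gt0 f_sc r_proper _ r_convex xs_min
  eta_gt0 eta_le tau_delay x_prox k.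
pose G z := m%:R^-1 *: \sum_(i < m) gs i z.
have inv_m_ge0 : 0 <= m%:R^-1 :> R by rewrite invr_ge0.
have fG : is_gateaux_gradient f G.
  by apply: is_gateaux_gradient_scale_sum => i; exact: is_gradient_gateaux.
have G_lip : lipschitz_with G L by exact: lipschitz_scale_sum.
have mu_le_L : mu <= L.
  exact: strongly_monotone_lipschitz_le hn (strongly_convex_gradient_monotone fG f_sc) G_lip.
have L_gt0 : 0 < L by apply: lt_le_trans mu_le_L.
have etaL : eta * L <= 1 by rewrite -ler_pdivlMr // div1r.
have etamu : eta * mu <= 1 by apply: le_trans etaL; rewrite ler_pM2l.
have x_step j : x j.+1 = x j + eta *: d j.
  by rewrite /d scalerA mulfV ?gt_eqF // scale1r addrC subrK.
have := x_prox k; rewrite x_step => /(prox_grad_step_error fG f_sc G_lip r_proper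
  r_convex xs_min mu_gt0 eta_gt0 etaL etamu) step.
set S := \sum_(k - K <= j < k) enorm (d j).
have delay : enorm (G (x k) - g k) <= L * (eta * S).
  have tau_in i : (k - K <= tau i k <= k)%N by apply/andP; exact: tau_delay.
  apply: le_trans (enorm_scale_sum_delayed inv_m_ge0 gs_lip Ls_ge0 tau_in) _.
  apply: ler_wpM2l; first exact: ltW.
  rewrite mulr_sumr; apply: ler_sum => j _.
  by rewrite x_step addrAC subrr add0r enormZ gtr0_norm.
rewrite -(ler_pM2l mu_gt0) /Q.
have -> : mu * (2 / mu * enorm (d k) + 2 * eta * (L / mu) * S)
    = 2 * (enorm (d k) + L * (eta * S)).
  by field; rewrite gt_eqF.
by apply: le_trans step _; rewrite ler_pM2l // lerD2l.
Qed.
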